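(* Weak-SW-JR does not imply IW-JR, IW-JR does not imply weak-SW-JR, and the two are not mutually exclusive: there exist an approval-based SCV instance and committees $W^1,W^2,W^3$ for it such that $W^1$ satisfies weak-SW-JR but not IW-JR, $W^2$ satisfies IW-JR but not weak-SW-JR, and $W^3$ satisfies both weak-SW-JR and IW-JR.
   Context: An approval-based sub-committee voting (SCV) instance consists of a set of voters $N=\{1,\ldots,n\}$, a finite set of candidates $C$ partitioned into candidate subsets $C_1,\ldots,C_\ell$, positive integer quotas $k_j\le |C_j|$ with $k=\sum_{j=1}^\ell k_j$, and approval ballots $A_i\subseteq C$ for $i\in N$. A committee is a set $W\subseteq C$ with $|W\cap C_j|=k_j$ for every $j$. $W$ satisfies Intra-wise JR (IW-JR) if for every $X\subseteq N$ and every $j$, whenever $|X|\ge n/k_j$ and $|(\bigcap_{i\in X}A_i)\cap C_j|\ge 1$, we have $|W\cap C_j\cap \bigcup_{i\in X}A_i|\ge 1$. $W$ satisfies weak-SW-JR if for every $X\subseteq N$ with $|X|\ge n/k$ and $|(\bigcap_{i\in X}A_i)\cap C_j|\ge 1$ for all $j=1,\ldots,\ell$ we have $|W\cap \bigcup_{i\in X}A_i|\ge 1$. *)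

From mathcomp Require Import all_boot all_order all_algebra.
Set Implicit Arguments. Unset Strict Implicit. Unset Printing Implicit Defensive.
Import Order.TTheory GRing.Theory Num.Theory.

(* Voters are 'I_n, candidates are 'I_m, the partition C_1..C_l of the
   candidates is given by the map [part] (C_j = part^-1(j)), quotas [quota],
   ballots [ballot i] (A_i). *)
Unset Implicit Arguments.
Record scv_instance := SCV {
  n_voters : nat;
  n_cands : nat;
  n_parts : nat;
  part : 'I_n_cands -> 'I_n_parts;
  quota : 'I_n_parts -> nat;
  ballot : 'I_n_voters -> {set 'I_n_cands}
}.

Set Implicit Arguments.
Section Defs.
Variable I : scv_instance.

Definition Voter := 'I_(n_voters I).
Definition Cand := 'I_(n_cands I).
Definition Part := 'I_(n_parts I).

Definition cset (j : Part) : {set Cand} := [set c : Cand | part I c == j].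

Definition ktot : nat := \sum_(j : Part) quota I j.

Definition valid_instance : Prop :=
  0 < n_voters I /\ forall j : Part, 0 < quota I j <= #|cset j|.

Definition committee (W : {set Cand}) : Prop :=
  forall j : Part, #|W :&: cset j| = quota I j.

Definition bigcapA (X : {set Voter}) : {set Cand} :=
  [set c | [forall i in X, c \in ballot I i]].
Definition bigcupA (X : {set Voter}) : {set Cand} :=
  [set c | [exists i in X, c \in ballot I i]].

Definition large (X : {set Voter}) (q : nat) : Prop :=
  ((n_voters I)%:R / q%:R <= (#|X|)%:R :> rat)%R.

Definition IW_JR (W : {set Cand}) : Prop :=
  forall (X : {set Voter}) (j : Part),
    large X (quota I j) -> 1 <= #|bigcapA X :&: cset j| ->
    1 <= #|W :&: cset j :&: bigcupA X|.

Definition weak_SW_JR (W : {set Cand}) : Prop :=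
  forall X : {set Voter},
    large X ktot -> (forall j : Part, 1 <= #|bigcapA X :&: cset j|) ->
    1 <= #|W :&: bigcupA X|.

End Defs.

(* Take four voters and candidates 0..5 split into C_1 = {0,1,2} and C_2 = {3,4,5},
   both with quota 2, so that n/k_j = 2 and n/k = 1; the ballots are {0,3}, {1,4},
   {1,5} and the empty ballot.  Two voters sharing a candidate of one part must be
   voters 1 and 2 sharing candidate 1, so IW-JR holds exactly when 1 is elected.  A
   voter approving a candidate of each part is one of the first three, so a committee
   meeting the first three ballots is weak-SW-JR, while one missing {0,3} is not. *)

From mathcomp Require Import all_boot all_order all_algebra.
Import GRing.Theory Num.Theory.
Set Implicit Arguments. Unset Strict Implicit. Unset Printing Implicit Defensive.

Section Representation.
Variable I : scv_instance.
Implicit Types (X : {set Voter I}) (W : {set Cand I}) (q : nat).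

Definition supporters (c : Cand I) : {set Voter I} := [set i | c \in ballot I i].

Lemma committeeP W : reflect (committee W) [forall j, #|W :&: cset j| == quota I j].
Proof. by apply: (iffP forallP) => eqW j; apply/eqP. Qed.

Lemma largeP X q : 0 < q -> large X q <-> n_voters I <= #|X| * q.
Proof. by move=> q_gt0; rewrite /large ler_pdivrMr ?ltr0n // -natrM ler_nat. Qed.

Lemma large_card_gt0 X q : 0 < n_voters I -> 0 < q -> large X q -> 0 < #|X|.
Proof.
move=> n_gt0 q_gt0 /(largeP _ q_gt0) le_n_Xq.
by rewrite lt0n; apply: contraTneq le_n_Xq => ->; rewrite -ltnNge.
Qed.

Lemma bigcapA_inf X i : i \in X -> bigcapA X \subset ballot I i.
Proof. by move=> Xi; apply/subsetP=> c; rewrite inE => /forall_inP; apply. Qed.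

Lemma bigcupA_sup X i : i \in X -> ballot I i \subset bigcupA X.
Proof. by move=> Xi; apply/subsetP=> c Ac; rewrite inE; apply/exists_inP; exists i. Qed.

Lemma weak_SW_JR_of_voters W :
  0 < n_voters I -> 0 < ktot I ->
  (forall i, [forall j, 0 < #|ballot I i :&: cset j|] -> 0 < #|W :&: ballot I i|) ->
  weak_SW_JR W.
Proof.
move=> n_gt0 k_gt0 hitW X /(large_card_gt0 n_gt0 k_gt0) /card_gt0P [i Xi] capX.
have /card_gt0P [c /setIP [Wc Ac]] : 0 < #|W :&: ballot I i|.
  apply/hitW/forallP=> j; apply: leq_trans (capX j) _.
  by rewrite subset_leq_card ?setSI ?bigcapA_inf.
by apply/card_gt0P; exists c; rewrite inE Wc (subsetP (bigcupA_sup Xi)).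
Qed.

Lemma IW_JR_of_popular W :
  valid_instance I ->
  (forall c, n_voters I <= #|supporters c| * quota I (part I c) -> c \in W) ->
  IW_JR W.
Proof.
move=> [n_gt0 quota_gt0] popularW X j largeX /card_gt0P [c].
rewrite !inE => /andP [/forall_inP capXc /eqP partc].
have q_gt0 : 0 < quota I j by case/andP: (quota_gt0 j).
have /card_gt0P [i Xi] := large_card_gt0 n_gt0 q_gt0 largeX.
have sub_X : X \subset supporters c by apply/subsetP=> i' /capXc; rewrite inE.
have Wc : c \in W.
  apply: popularW; rewrite partc; apply: leq_trans ((largeP _ q_gt0).1 largeX) _.
  by rewrite leq_mul2r subset_leq_card ?orbT.
apply/card_gt0P; exists c; rewrite !inE Wc partc eqxx.
by apply/exists_inP; exists i => //; apply: capXc.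
Qed.

End Representation.

Lemma card_enum (T : finType) (A : {pred T}) : #|A| = count (mem A) (enum T).
Proof. by rewrite enumT cardE /enum_mem size_filter. Qed.

Lemma forall_enum (T : finType) (P : pred T) : [forall x, P x] = all P (enum T).
Proof. by apply/forallP/allP=> [PT x _ | PT x]; [apply: PT | apply: PT; rewrite mem_enum]. Qed.

Lemma exists_enum (T : finType) (P : pred T) : [exists x, P x] = has P (enum T).
Proof. by apply/existsP/hasP=> [[x Px] | [x _ Px]]; exists x; rewrite ?mem_enum. Qed.

Lemma enum_ord_inZp n : enum 'I_n.+1 = map inZp (iota 0 n.+1).
Proof.
rewrite -val_enum_ord -map_comp -[LHS]map_id.
by apply: eq_map => i /=; rewrite valZpK.
Qed.

(* [card], [Finite.enum] and [finset] are locked, so [vm_compute] alone gets stuck: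
   quantifiers and cardinalities are first unrolled over explicit ordinals and set
   membership is rewritten away; splitting conjunctions keeps each rewrite small. *)
Ltac unroll_ordinals :=
  repeat progress (rewrite ?card_enum ?forall_enum ?exists_enum ?enum_ord_inZp /=;
    repeat (apply/andP; split); rewrite ?(in_setI, in_set1, in_set));
  vm_compute.

Definition example_ballots : seq (seq nat) := [:: [:: 0; 3]; [:: 1; 4]; [:: 1; 5]; [::]].

Definition example : scv_instance := {|
  n_voters := 4; n_cands := 6; n_parts := 2;
  part c := if c < 3 then ord0 else ord_max;
  quota _ := 2;
  ballot i := [set c | val c \in nth [::] example_ballots i] |}.

Definition committee_of (s : seq nat) : {set Cand example} := [set c | val c \in s].

Definition W1 := committee_of [:: 0; 2; 4; 5].
Definition W2 := committee_of [:: 1; 2; 4; 5].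
Definition W3 := committee_of [:: 0; 1; 3; 4].

Lemma example_valid : valid_instance example.
Proof. by split=> //; apply/forallP; rewrite /cset; unroll_ordinals. Qed.

Lemma example_ktot : ktot example = 4.
Proof. by rewrite /ktot sum_nat_const card_ord. Qed.

Lemma example_committees : [/\ committee W1, committee W2 & committee W3].
Proof. by split; apply/committeeP; rewrite /cset; unroll_ordinals. Qed.

Lemma example_weak_SW_JR : weak_SW_JR W1 /\ weak_SW_JR W3.
Proof.
split; apply: weak_SW_JR_of_voters; rewrite ?example_ktot // => i; apply/implyP;
  by move: i; apply/forallP; rewrite /cset; unroll_ordinals.
Qed.

Lemma example_IW_JR : IW_JR W2 /\ IW_JR W3.
Proof.
split; apply: IW_JR_of_popular example_valid _ => c; apply/implyP;
  by move: c; apply/forallP; rewrite /supporters; unroll_ordinals.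
Qed.

Lemma W1_not_IW_JR : ~ IW_JR W1.
Proof.
pose X : {set Voter example} := [set i | val i \in [:: 1; 2]].
have largeX : large X (quota example ord0) by apply/largeP; rewrite // /X; unroll_ordinals.
move=> /(_ X ord0 largeX); rewrite /X /cset /bigcapA /bigcupA; unroll_ordinals.
by move/(_ isT).
Qed.

Lemma W2_not_weak_SW_JR : ~ weak_SW_JR W2.
Proof.
pose X : {set Voter example} := [set ord0].
have largeX : large X (ktot example) by apply/largeP; rewrite example_ktot // cards1.
have capX : forall j, 0 < #|bigcapA X :&: cset j|.
  by apply/forallP; rewrite /X /cset /bigcapA; unroll_ordinals.
by move=> /(_ X largeX capX); rewrite /X /bigcupA; unroll_ordinals.
Qed.

Theorem mainTheorem4 :
  exists I : scv_instance, valid_instance I /\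
    exists W1 W2 W3 : {set Cand I},
      [/\ committee W1 /\ weak_SW_JR W1 /\ ~ IW_JR W1,
          committee W2 /\ IW_JR W2 /\ ~ weak_SW_JR W2 &
          committee W3 /\ weak_SW_JR W3 /\ IW_JR W3].
Proof.
have [com1 com2 com3] := example_committees.
have [weak1 weak3] := example_weak_SW_JR.
have [iw2 iw3] := example_IW_JR.
exists example; split; first exact: example_valid.
exists W1, W2, W3; split.
- exact: (conj com1 (conj weak1 W1_not_IW_JR)).
- exact: (conj com2 (conj iw2 W2_not_weak_SW_JR)).
- exact: (conj com3 (conj weak3 iw3)).
Qed.
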